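(* Let $N\ge2$, $h=1/N$, and index vectors $Z\in\mathbb{R}^{(N+1)^2}$ by grid points $(x_i,y_j)=(ih,jh)$, $0\le i,j\le N$, writing $z_{i,j}$ for the components; let $Z_I\in\mathbb{R}^{(N-1)^2}$ denote the components at interior points $1\le i,j\le N-1$. Let $\mathcal{L}_h:\mathbb{R}^{(N+1)^2}\to\mathbb{R}^{(N-1)^2}$ be the five-point operator $$(\mathcal{L}_hZ)_{i,j}=-\frac{z_{i-1,j}+z_{i+1,j}-4z_{i,j}+z_{i,j-1}+z_{i,j+1}}{h^2},\quad 1\le i,j\le N-1.$$ Let $\beta>0$ and $\Phi,\Psi\in\mathbb{R}^{(N+1)^2}$ satisfy $$\mathcal{L}_h\Psi=-\beta\Phi_I,\qquad \mathcal{L}_h\Phi=\Psi_I .$$ Then $\mathcal{L}_h(\Psi^2+\beta\Phi^2)\le 0$ componentwise, where $\Psi^2,\Phi^2$ denote componentwise squares. *)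

From mathcomp Require Import all_boot all_order all_algebra.
Set Implicit Arguments. Unset Strict Implicit. Unset Printing Implicit Defensive.
Import Order.TTheory GRing.Theory Num.Theory.
Local Open Scope ring_scope.

(* Grid vectors Z in R^{(N+1)^2}: matrices indexed by 'I_(N+1) x 'I_(N+1),
   z_{i,j} = Z i j at the grid point (ih, jh). *)

(* component z_{i,j} for natural indices i j <= N (inord is the identity there) *)
Definition gcomp {R : ringType} (N : nat) (Z : 'M[R]_(N.+1)) (i j : nat) : R :=
  Z (inord i) (inord j).

Definition interior (N i : nat) : bool := (1 <= i <= N.-1)%N.

(* five-point operator (L_h Z)_{i,j} with h = 1/N, meaningful for interior i j *)
Definition Lh {R : fieldType} (N : nat) (Z : 'M[R]_(N.+1)) (i j : nat) : R :=
  let h := (N%:R)^-1 in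
  - (gcomp Z i.-1 j + gcomp Z i.+1 j - 4 * gcomp Z i j
     + gcomp Z i j.-1 + gcomp Z i j.+1) / (h ^+ 2).

Definition sqv {R : ringType} (N : nat) (Z : 'M[R]_(N.+1)) : 'M[R]_(N.+1) :=
  map_mx (fun x => x ^+ 2) Z.

From mathcomp Require Import all_boot all_order all_algebra.
From mathcomp Require Import ring.
Import Order.TTheory GRing.Theory Num.Theory.
Local Open Scope ring_scope.

(* The five-point operator satisfies a discrete product rule:
   L_h(Z^2) = 2 Z L_h Z - (sum over the four neighbours of the squared
   differences) / h^2.  Applied to Psi^2 + beta Phi^2, the two cross terms
   become 2 Psi (-beta Phi) and 2 beta Phi Psi, which cancel, so only a
   nonpositive multiple of a sum of squares remains. *)

Definition nbr_sqdiff {R : nzRingType} {N : nat} (Z : 'M[R]_(N.+1)) (i j : nat) : R :=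
  (gcomp Z i.-1 j - gcomp Z i j) ^+ 2 + (gcomp Z i.+1 j - gcomp Z i j) ^+ 2
  + (gcomp Z i j.-1 - gcomp Z i j) ^+ 2 + (gcomp Z i j.+1 - gcomp Z i j) ^+ 2.

Lemma nbr_sqdiff_ge0 (R : realDomainType) (N : nat) (Z : 'M[R]_(N.+1)) (i j : nat) :
  0 <= nbr_sqdiff Z i j.
Proof. by rewrite /nbr_sqdiff !addr_ge0 ?sqr_ge0. Qed.

Section FivePointOperator.

Variables (R : fieldType) (N : nat).
Implicit Types (A B Z : 'M[R]_(N.+1)) (a : R) (i j : nat).

Lemma LhD A B i j : Lh (A + B) i j = Lh A i j + Lh B i j.
Proof. rewrite /Lh /gcomp !mxE; ring. Qed.

Lemma LhZ a A i j : Lh (a *: A) i j = a * Lh A i j.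
Proof. rewrite /Lh /gcomp !mxE; ring. Qed.

Lemma Lh_sqv Z i j :
  Lh (sqv Z) i j = 2 * gcomp Z i j * Lh Z i j - nbr_sqdiff Z i j / (N%:R^-1) ^+ 2.
Proof. rewrite /Lh /nbr_sqdiff /gcomp !mxE; ring. Qed.

End FivePointOperator.

Theorem lemma4p1 (R : realFieldType) (N : nat) (HN : (2 <= N)%N)
  (beta : R) (Hbeta : 0 < beta) (Phi Psi : 'M[R]_(N.+1))
  (H1 : forall i j : nat, interior N i -> interior N j ->
          Lh Psi i j = - beta * gcomp Phi i j)
  (H2 : forall i j : nat, interior N i -> interior N j ->
          Lh Phi i j = gcomp Psi i j) :
  forall i j : nat, interior N i -> interior N j ->
    Lh (sqv Psi + beta *: sqv Phi) i j <= 0.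
Proof.
move=> i j Hi Hj.
rewrite LhD LhZ !Lh_sqv H1 // H2 //.
set h2 := (N%:R^-1 : R) ^+ 2.
have -> : 2 * gcomp Psi i j * (- beta * gcomp Phi i j) - nbr_sqdiff Psi i j / h2
    + beta * (2 * gcomp Phi i j * gcomp Psi i j - nbr_sqdiff Phi i j / h2)
    = - ((nbr_sqdiff Psi i j + beta * nbr_sqdiff Phi i j) / h2) by ring.
rewrite oppr_le0 divr_ge0 ?sqr_ge0 //.
by rewrite addr_ge0 ?mulr_ge0 ?nbr_sqdiff_ge0 ?ltW.
Qed.
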